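(* Let $G$ be a finite vertex-transitive bipartite graph. Then $G$ is IS-imprimitive if and only if $G$ is disconnected.
   Context: Graphs are finite and simple; $\alpha(G)$ is the independence number. For $A\subseteq V(G)$, $N_G(A)=\{b: ab\in E(G)\text{ for some }a\in A\}$ and $N_G[A]=N_G(A)\cup A$. A (nonempty) independent set $A$ of $G$ is imprimitive if $|A|<\alpha(G)$ and $\frac{|A|}{|N_G[A]|}=\frac{\alpha(G)}{|V(G)|}$. $G$ is IS-imprimitive (called ''imprimitive'' in the paper's statement of this lemma) if it has an imprimitive independent set. *)

(* A finite simple graph is a symmetric irreflexive
   relation e : rel T on a finType T (vertex set = T). *)
From mathcomp Require Import all_boot all_fingroup.
Set Implicit Arguments. Unset Strict Implicit. Unset Printing Implicit Defensive.

Section Graphs.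
Variable T : finType.
Implicit Types (e : rel T) (A : {set T}).

Definition independent e A : bool :=
  [forall x in A, forall y in A, ~~ e x y].

Definition alpha e : nat := \max_(A : {set T} | independent e A) #|A|.

Definition nbhd e A : {set T} := [set b | [exists a in A, e a b]].
Definition cnbhd e A : {set T} := nbhd e A :|: A.

(* A nonempty independent set A is imprimitive if |A| < alpha(G) and
   |A| / |N[A]| = alpha(G) / |V(G)|  (stated by cross-multiplication). *)
Definition imprimitive_set e A : bool :=
  [&& independent e A, A != set0, #|A| < alpha e &
      #|A| * #|T| == alpha e * #|cnbhd e A|].

Definition IS_imprimitive e : Prop := exists A : {set T}, imprimitive_set e A.

Definition is_automorphism e (f : {perm T}) : Prop :=
  forall u v, e (f u) (f v) = e u v.

Definition vertex_transitive e : Prop :=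
  forall x y, exists f : {perm T}, is_automorphism e f /\ f x = y.

Definition bipartite e : Prop :=
  exists c : T -> bool, forall x y, e x y -> c x != c y.

Definition connected e : Prop := forall x y, connect e x y.

End Graphs.

From mathcomp Require Import all_boot all_fingroup.
From mathcomp Require Import zify.
Set Implicit Arguments. Unset Strict Implicit. Unset Printing Implicit Defensive.

(* A vertex-transitive graph is d-regular, and double counting the edges
   between an independent set A and N(A) gives d|A| <= d|N(A)|, with equality
   iff N(N(A)) is contained in A, i.e. iff N[A] is a union of connected
   components.  For a bipartite regular graph the colour classes give
   alpha = |V|/2 (or alpha = |V| when there are no edges), and with this value
   the imprimitivity equation |A| |V| = alpha |N[A]| is exactly the equality
   case.  So an imprimitive set spans a proper union of components, while in a
   disconnected graph one side of the bipartition of a component is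
   imprimitive. *)

Section Independence.
Variables (T : finType) (e : rel T).
Implicit Types (A : {set T}).

Lemma independentP A :
  reflect (forall u v, u \in A -> v \in A -> ~~ e u v) (independent e A).
Proof.
apply: (iffP forall_inP) => [indA u v uA vA | indA u uA].
  by move/forall_inP: (indA u uA); apply.
by apply/forall_inP => v; apply: indA.
Qed.

Lemma card_cnbhd A : independent e A -> #|cnbhd e A| = #|nbhd e A| + #|A|.
Proof.
move/independentP => indA; rewrite cardsU.
suff -> : nbhd e A :&: A = set0 by rewrite cards0 subn0.
apply/setP => z; rewrite !inE; apply/negbTE/andP => -[/exists_inP[a aA eaz] zA].
by move: (indA a z aA zA); rewrite eaz.
Qed.

Lemma leq_alpha A : independent e A -> #|A| <= alpha e.
Proof. exact: (leq_bigmax_cond A). Qed.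

Lemma alpha_witness : exists2 A, independent e A & alpha e = #|A|.
Proof.
have indA0 : independent e set0 by apply/independentP => u v; rewrite inE.
rewrite /alpha (bigmax_eq_arg set0) //.
by case: arg_maxnP => // A indA _; exists A.
Qed.

Lemma alpha_edgeless : (forall x y, ~~ e x y) -> alpha e = #|T|.
Proof.
move=> noedge; apply/eqP; rewrite eqn_leq -{2}cardsT leq_alpha ?andbT.
  by apply/bigmax_leqP => A _; apply: max_card.
by apply/independentP => u v _ _; apply: noedge.
Qed.

Lemma bipartite_alpha : bipartite e -> #|T| <= alpha e * 2.
Proof.
case=> c c_proper; set X := [set z | c z].
have indX : independent e X.
  apply/independentP => u v; rewrite !inE => cu cv.
  by apply/negP => /c_proper; rewrite cu cv.
have indCX : independent e (~: X).
  apply/independentP => u v; rewrite !inE => /negbTE cu /negbTE cv.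
  by apply/negP => /c_proper; rewrite cu cv.
by have := cardsC X; have := leq_alpha indX; have := leq_alpha indCX; lia.
Qed.

Lemma cnbhd_closed A : nbhd e (nbhd e A) \subset A ->
  forall u v, e u v -> u \in cnbhd e A -> v \in cnbhd e A.
Proof.
move=> NNsubA u v euv; rewrite /cnbhd !in_setU => /orP[uN | uA].
  by rewrite (subsetP NNsubA) ?orbT // inE; apply/exists_inP; exists u.
by rewrite inE; apply/orP; left; apply/exists_inP; exists u.
Qed.

Lemma connect_closed (S : {set T}) x y :
  (forall u v, e u v -> u \in S -> v \in S) -> connect e x y -> x \in S -> y \in S.
Proof.
move=> closedS /connectP[p p_path ->]; elim: p x p_path => //= z p IHp x.
by case/andP=> exz p_path xS; apply: IHp p_path (closedS _ _ exz xS).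
Qed.

End Independence.

Section Degrees.
Variables (T : finType) (e : rel T).
Implicit Types (A B : {set T}).

Definition deg x := \sum_y (e x y : nat).
Definition edges_to B x := \sum_(y in B) (e x y : nat).

Lemma deg_split B x : deg x = edges_to B x + edges_to (~: B) x.
Proof.
rewrite /deg (bigID (mem B)) /=; congr (_ + _).
by apply: eq_bigl => y; rewrite inE.
Qed.

Lemma leq_edges_to_deg B x : edges_to B x <= deg x.
Proof. by rewrite (deg_split B) leq_addr. Qed.

Lemma edges_to_deg B x :
  (forall y, e x y -> y \in B) <-> edges_to B x = deg x.
Proof.
rewrite (deg_split B) -{1}[edges_to B x]addn0; split => [nbrsB | /addnI/esym/eqP].
  congr (_ + _); symmetry; apply: big1 => y; rewrite inE.
  by case: (boolP (e x y)) => // /nbrsB ->.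
rewrite sum_nat_eq0 => /forall_inP noedge y exy; apply/negPn/negP => yNB.
by move: (noedge y); rewrite inE exy => /(_ yNB).
Qed.

Lemma deg_autom f x : is_automorphism e f -> deg (f x) = deg x.
Proof.
move=> autf; rewrite /deg (reindex_inj (@perm_inj _ f)).
by apply: eq_bigr => y _; rewrite autf.
Qed.

Lemma vertex_transitive_regular : vertex_transitive e -> exists d, forall x, deg x = d.
Proof.
move=> vt; case: (pickP T) => [x0 _ | T0]; last by exists 0 => x; have := T0 x.
exists (deg x0) => x; have [f [autf <-]] := vt x0 x; exact: deg_autom.
Qed.

Hypothesis e_sym : symmetric e.

Lemma double_count A B : \sum_(a in A) edges_to B a = \sum_(b in B) edges_to A b.
Proof.
rewrite /edges_to exchange_big; apply: eq_bigr => b _; apply: eq_bigr => a _.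
by rewrite e_sym.
Qed.

Variable d : nat.
Hypothesis regular : forall x, deg x = d.

Lemma regular0_edgeless : d = 0 -> forall x y, ~~ e x y.
Proof.
move=> d0 x y; apply/negP => exy; have := regular x; rewrite d0 => /eqP.
by rewrite sum_nat_eq0 => /forallP/(_ y); rewrite exy.
Qed.

Lemma edges_to_nbhd_sum A : \sum_(b in nbhd e A) edges_to A b = d * #|A|.
Proof.
rewrite -double_count mulnC -sum_nat_const; apply: eq_bigr => a aA.
rewrite -(regular a); apply/edges_to_deg => y eay.
by rewrite inE; apply/exists_inP; exists a.
Qed.

Lemma deg_card_le_nbhd A : d * #|A| <= d * #|nbhd e A|.
Proof.
rewrite -edges_to_nbhd_sum mulnC -sum_nat_const; apply: leq_sum => b _.
by rewrite -(regular b) leq_edges_to_deg.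
Qed.

(* Equality in the double count forces every vertex of N(A) to send all of
   its d edges into A. *)
Lemma balancedP A : d * #|A| = d * #|nbhd e A| <-> nbhd e (nbhd e A) \subset A.
Proof.
split => [balA | NNsubA].
  have edges_le_d b : b \in nbhd e A -> edges_to A b <= d ?= iff (edges_to A b == d).
    by move=> _; rewrite -(regular b); apply/leqif_eq/leq_edges_to_deg.
  have [_] := leqif_sum edges_le_d.
  rewrite edges_to_nbhd_sum sum_nat_const [_ * d]mulnC balA eqxx.
  move=> /esym/forall_inP all_full; apply/subsetP => y.
  rewrite inE => /exists_inP[b bN eby].
  by move/eqP: (all_full b bN); rewrite -(regular b) => /edges_to_deg; apply.
apply/eqP; rewrite eqn_leq deg_card_le_nbhd /=.
apply: leq_trans (deg_card_le_nbhd _) _.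
by rewrite leq_mul2l subset_leq_card ?orbT.
Qed.

Hypothesis bip : bipartite e.

Lemma regular_bipartite_alpha : d * (alpha e * 2) = d * #|T|.
Proof.
apply/eqP; rewrite eqn_leq andbC leq_mul2l bipartite_alpha // orbT /=.
have [A indA ->] := alpha_witness e.
apply: (@leq_trans (d * #|nbhd e A| + d * #|A|)).
  by rewrite muln2 -addnn mulnDr leq_add2r deg_card_le_nbhd.
by rewrite -mulnDr -card_cnbhd // leq_mul2l max_card orbT.
Qed.

Lemma balanced_ratioP A : independent e A -> A != set0 ->
  d * #|A| = d * #|nbhd e A| <-> #|A| * #|T| = alpha e * #|cnbhd e A|.
Proof.
move=> indA /set0Pn[a aA]; have A_gt0 : 0 < #|A| by apply/card_gt0P; exists a.
have alpha_ge := leq_alpha indA; rewrite card_cnbhd //.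
have [d0 | d_gt0] := posnP d.
  have noedge := regular0_edgeless d0.
  have -> : nbhd e A = set0.
    apply/setP => y; rewrite !inE.
    by apply/exists_inP => -[x _]; rewrite (negbTE (noedge x y)).
  by rewrite alpha_edgeless // d0 cards0; split => _; nia.
have /eqP := regular_bipartite_alpha; rewrite eqn_pmul2l // => /eqP <-.
by split => ?; nia.
Qed.

End Degrees.

Section ComponentSide.
Variables (T : finType) (e : rel T) (c : T -> bool).
Hypothesis c_proper : forall x y, e x y -> c x != c y.
Variable x : T.

Definition component_side := [set z | connect e x z & c z == c x].

Lemma independent_component_side : independent e component_side.
Proof.
apply/independentP => u v; rewrite !inE => /andP[_ /eqP cu] /andP[_ /eqP cv].
by apply/negP => /c_proper; rewrite cu cv eqxx.
Qed.

Lemma nbhd_component_side y :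
  y \in nbhd e component_side -> connect e x y && (c y != c x).
Proof.
rewrite inE => /exists_inP[a]; rewrite inE => /andP[xa /eqP ca] eay.
by rewrite (connect_trans xa (connect1 eay)) -ca eq_sym c_proper.
Qed.

Lemma nbhd2_component_side :
  nbhd e (nbhd e component_side) \subset component_side.
Proof.
apply/subsetP => z; rewrite inE => /exists_inP[y /nbhd_component_side/andP[xy cy] eyz].
rewrite inE (connect_trans xy (connect1 eyz)) /=.
by move: cy (c_proper eyz); case: (c x); case: (c y); case: (c z).
Qed.

(* A vertex of the component on the other side from x is adjacent to the
   last vertex before it on a path from x, which lies on x's side. *)
Lemma cnbhd_component_side : cnbhd e component_side = [set z | connect e x z].
Proof.
apply/setP => z; rewrite /cnbhd in_setU [z \in [set _ | _]]inE; apply/idP/idP.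
  by case/orP => [/nbhd_component_side/andP[] | ]; rewrite // inE => /andP[].
move=> xz; case: (boolP (c z == c x)) => [cz | czx].
  by rewrite [z \in component_side]inE xz cz orbT.
have /connectP[p p_path z_last] := xz.
case/lastP: p p_path z_last => [_ zx | p w]; first by rewrite zx eqxx in czx.
rewrite rcons_path last_rcons => /andP[p_path ew] zw; subst z.
apply/orP; left; rewrite inE; apply/exists_inP; exists (last x p) => //.
rewrite inE (_ : connect e x (last x p)) /=; last by apply/connectP; exists p.
by move: czx (c_proper ew); case: (c x); case: (c w); case: (c (last x p)).
Qed.

End ComponentSide.

Theorem lemma3p2 (T : finType) (e : rel T)
  (e_sym : symmetric e) (e_irr : irreflexive e)
  (vt : vertex_transitive e) (bip : bipartite e) :
  IS_imprimitive e <-> ~ connected e.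
Proof.
have [d regular] := vertex_transitive_regular vt.
have ratioP := balanced_ratioP e_sym regular bip.
split.
- case=> A /and4P[indA A_neq0 A_lt /eqP ratio] conn.
  have /set0Pn[a aA] := A_neq0.
  have /(balancedP e_sym regular) NNsubA := proj2 (ratioP A indA A_neq0) ratio.
  have NA_full : cnbhd e A = setT.
    apply/setP => y; rewrite in_setT.
    by apply: (connect_closed (cnbhd_closed NNsubA) (conn a y)); rewrite in_setU aA orbT.
  have T_gt0 : 0 < #|T| by apply/card_gt0P; exists a.
  move/eqP: ratio; rewrite NA_full cardsT eqn_pmul2r // => /eqP A_alpha.
  by rewrite A_alpha ltnn in A_lt.
- move=> disconn; have [c c_proper] := bip.
  have [x [y xy_disconn]] : exists x y, ~~ connect e x y.
    case: (boolP [exists x, exists y, ~~ connect e x y]) => [|/existsPn conn].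
      by case/existsP=> x /existsP[y]; exists x, y.
    by case: disconn => x y; have /existsPn/(_ y)/negPn := conn x.
  set A := component_side e c x.
  have indA := independent_component_side c_proper x.
  have A_neq0 : A != set0 by apply/set0Pn; exists x; rewrite inE connect0 eqxx.
  have ratio := proj1 (ratioP A indA A_neq0)
                  (proj2 (balancedP e_sym regular A) (nbhd2_component_side c_proper x)).
  have comp_lt : #|cnbhd e A| < #|T|.
    rewrite cnbhd_component_side // -cardsT; apply: proper_card; rewrite properT.
    apply/negP => /eqP compT.
    by move: (in_setT y); rewrite -compT inE (negbTE xy_disconn).
  have A_gt0 : 0 < #|A| by apply/card_gt0P/set0Pn.
  by exists A; apply/and4P; split => //; [nia | apply/eqP].
Qed.
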